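(* For all $t\in\mathbb N$ the probability distribution $c_t$ on $\mathbb Z$ has mean $0$ and variance $v_t$.
   Context: Let $\mathsf r(n)$ be the number of (overlapping) occurrences of $\mathtt{11}$ in the binary expansion of $n\in\mathbb N=\{0,1,\dots\}$, and $d(t,n)=\mathsf r(n+t)-\mathsf r(n)$. For $k\in\mathbb Z$ let $c_t(k)$ be the asymptotic density (which exists) of $\{n\in\mathbb N:d(t,n)=k\}$; these values form a probability distribution $c_t$ on $\mathbb Z$. Define $(v_t)_{t\in\mathbb N}$ by $v_0=0$, $v_1=3/2$, and $v_{4t}=v_{2t}$, $v_{4t+2}=v_{2t+1}+1$, $v_{2t+1}=\frac{v_t+v_{t+1}}2+\frac34$ for all $t\in\mathbb N$. *)

From Stdlib Require Import Reals ZArith Arith List.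
From Coquelicot Require Import Coquelicot.
Open Scope R_scope.

(* Number of (overlapping) occurrences of the block 11 in the binary
   expansion of a positive number.  For p = 2q+1 (constructor xI q) the last
   digit is 1, and the second-to-last digit (= last digit of q) is 1 iff q is
   odd, i.e. q = xI _ or q = xH. *)
Fixpoint r_pos (p : positive) : nat :=
  match p with
  | xI q => (match q with xO _ => 0 | _ => 1 end + r_pos q)%nat
  | xO q => r_pos q
  | xH => 0%nat
  end.

Definition r (n : nat) : nat :=
  match N.of_nat n with
  | N0 => 0%nat
  | Npos p => r_pos p
  end.

Definition d (t n : nat) : Z := (Z.of_nat (r (n + t)) - Z.of_nat (r n))%Z.

Definition count_d (t : nat) (k : Z) (N : nat) : nat :=
  length (filter (fun n => Z.eqb (d t n) k) (seq 0 N)).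

Definition has_density_d (t : nat) (k : Z) (c : R) : Prop :=
  is_lim_seq (fun N => INR (count_d t k N) / INR N) c.

Definition Zsum_abs (f : Z -> R) (l : R) : Prop :=
  ex_series (fun n : nat => Rabs (f (Z.of_nat n)) + Rabs (f (- Z.of_nat n)%Z))
  /\ is_series (fun n : nat =>
        match n with
        | O => f 0%Z
        | S _ => f (Z.of_nat n) + f (- Z.of_nat n)%Z
        end) l.

(* Since r(2n) = r(n) and r(2n+1) = r(n) + [n odd], after splitting both t and n by parity,
   d(t, .) restricted to even n, resp. odd n, has even and odd subsequences that are
   translates by 0 or +-1 of such restrictions of d(floor(t/2), .) or d(ceil(t/2), .).
   The density of a value in an interleaving of two sequences is the average of the two
   densities, so by strong induction on t the two halves of d(t, .) have laws e_t, o_t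
   with exponentially small tails, mass 1, means +-[t odd]/2, and with the mean of their
   second moments obeying the recursion that defines v_t; then c_t = (e_t + o_t)/2.
   The exception is t = 1, where d(1, 4m+3) = d(1, 2m+1) - 1 makes the law of the odd
   half a fixed point of an averaging map, found explicitly. *)

From Stdlib Require Import Reals ZArith NArith Arith List Lia Lra.
From Coquelicot Require Import Coquelicot.
Open Scope R_scope.

(** * Binary recursion of [d] *)

Definition parity (n : nat) : Z := Z.b2z (Nat.odd n).

Lemma parity_add_double (m u : nat) : parity (2 * m + u) = parity u.
Proof. unfold parity. rewrite Nat.add_comm, Nat.odd_add_mul_2. reflexivity. Qed.

Lemma parity_add_succ_double (m u : nat) : parity (2 * m + 1 + u) = (1 - parity u)%Z.
Proof.
  unfold parity. replace (2 * m + 1 + u)%nat with (S u + 2 * m)%nat by lia.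
  rewrite Nat.odd_add_mul_2, Nat.odd_succ, <- Nat.negb_odd.
  destruct (Nat.odd u); reflexivity.
Qed.

Lemma parity_double (m : nat) : parity (2 * m) = 0%Z.
Proof. rewrite <- (Nat.add_0_r (2 * m)). apply parity_add_double. Qed.

Lemma parity_succ_double (m : nat) : parity (2 * m + 1) = 1%Z.
Proof. rewrite <- (Nat.add_0_r (2 * m + 1)), parity_add_succ_double. reflexivity. Qed.

Lemma parity_succ (u : nat) : parity (u + 1) = (1 - parity u)%Z.
Proof. rewrite Nat.add_comm. exact (parity_add_succ_double 0 u). Qed.

Lemma parity_01 (u : nat) : parity u = 0%Z \/ parity u = 1%Z.
Proof. unfold parity. destruct (Nat.odd u); auto. Qed.

Lemma r_double (n : nat) : r (2 * n) = r n.
Proof. unfold r. rewrite Nat2N.inj_double. destruct (N.of_nat n); reflexivity. Qed.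

Lemma r_succ_double (n : nat) : Z.of_nat (r (2 * n + 1)) = (Z.of_nat (r n) + parity n)%Z.
Proof.
  unfold r, parity. replace (2 * n + 1)%nat with (S (2 * n)) by lia.
  rewrite Nat2N.inj_succ_double.
  destruct (N.of_nat n) as [|p] eqn:Hn; [replace n with 0%nat by lia; reflexivity|].
  replace n with (Pos.to_nat p) by lia.
  destruct p as [q|q|]; simpl.
  - rewrite Pos2Nat.inj_xI, Nat.odd_succ, Nat.even_mul. simpl. destruct q; simpl; lia.
  - rewrite Pos2Nat.inj_xO, Nat.odd_mul. simpl. lia.
  - reflexivity.
Qed.

Lemma d_double_double (t n : nat) : d (2 * t) (2 * n) = d t n.
Proof.
  unfold d. replace (2 * n + 2 * t)%nat with (2 * (n + t))%nat by lia.
  rewrite !r_double. reflexivity.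
Qed.

Lemma d_double_succ_double (t n : nat) :
  d (2 * t) (2 * n + 1) = (d t n + parity (n + t) - parity n)%Z.
Proof.
  unfold d. replace (2 * n + 1 + 2 * t)%nat with (2 * (n + t) + 1)%nat by lia.
  rewrite !r_succ_double. lia.
Qed.

Lemma d_succ_double_double (t n : nat) :
  d (2 * t + 1) (2 * n) = (d t n + parity (n + t))%Z.
Proof.
  unfold d. replace (2 * n + (2 * t + 1))%nat with (2 * (n + t) + 1)%nat by lia.
  rewrite r_succ_double, r_double. lia.
Qed.

Lemma d_succ_double_succ_double (t n : nat) :
  d (2 * t + 1) (2 * n + 1) = (d (t + 1) n - parity n)%Z.
Proof.
  unfold d. replace (2 * n + 1 + (2 * t + 1))%nat with (2 * (n + (t + 1)))%nat by lia.
  rewrite r_succ_double, r_double. lia.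
Qed.

Definition d_even (t n : nat) : Z := d t (2 * n).
Definition d_odd (t n : nat) : Z := d t (2 * n + 1).

Lemma d_even_double_even (t m : nat) : d_even (2 * t) (2 * m) = d_even t m.
Proof. apply d_double_double. Qed.

Lemma d_even_double_odd (t m : nat) : d_even (2 * t) (2 * m + 1) = d_odd t m.
Proof. apply d_double_double. Qed.

Lemma d_odd_double_even (t m : nat) : d_odd (2 * t) (2 * m) = (d_even t m + parity t)%Z.
Proof.
  unfold d_even, d_odd. rewrite d_double_succ_double, parity_add_double, parity_double. lia.
Qed.

Lemma d_odd_double_odd (t m : nat) : d_odd (2 * t) (2 * m + 1) = (d_odd t m - parity t)%Z.
Proof.
  unfold d_odd. rewrite d_double_succ_double, parity_add_succ_double, parity_succ_double. lia.
Qed.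

Lemma d_even_succ_double_even (t m : nat) :
  d_even (2 * t + 1) (2 * m) = (d_even t m + parity t)%Z.
Proof. unfold d_even. rewrite d_succ_double_double, parity_add_double. reflexivity. Qed.

Lemma d_even_succ_double_odd (t m : nat) :
  d_even (2 * t + 1) (2 * m + 1) = (d_odd t m + (1 - parity t))%Z.
Proof.
  unfold d_even, d_odd. rewrite d_succ_double_double, parity_add_succ_double. reflexivity.
Qed.

Lemma d_odd_succ_double_even (t m : nat) : d_odd (2 * t + 1) (2 * m) = d_even (t + 1) m.
Proof. unfold d_odd, d_even. rewrite d_succ_double_succ_double, parity_double. lia. Qed.

Lemma d_odd_succ_double_odd (t m : nat) :
  d_odd (2 * t + 1) (2 * m + 1) = (d_odd (t + 1) m - 1)%Z.
Proof.
  unfold d_odd. rewrite d_succ_double_succ_double, parity_succ_double. reflexivity.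
Qed.

Lemma d_zero (n : nat) : d 0 n = 0%Z.
Proof. unfold d. rewrite Nat.add_0_r. lia. Qed.

(** * Densities *)

Definition count (p : nat -> bool) (N : nat) : nat := length (filter p (seq 0 N)).

Definition compl (p : nat -> bool) : nat -> bool := fun n => negb (p n).

Lemma count_S (p : nat -> bool) (N : nat) :
  count p (S N) = (count p N + if p N then 1 else 0)%nat.
Proof.
  unfold count. rewrite seq_S, filter_app, length_app. simpl.
  destruct (p N); simpl; lia.
Qed.

Lemma count_mono (p : nat -> bool) (N M : nat) : (N <= M)%nat -> (count p N <= count p M)%nat.
Proof. induction 1; [lia|]. rewrite count_S. destruct (p m); lia. Qed.

Lemma count_compl (p : nat -> bool) (N : nat) : (count p N + count (compl p) N)%nat = N.
Proof.
  induction N; [reflexivity|]. rewrite !count_S. unfold compl at 2. destruct (p N); simpl; lia.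
Qed.

Lemma count_true (p : nat -> bool) (N : nat) : (forall n, p n = true) -> count p N = N.
Proof. intros Hp. induction N; [reflexivity|]. rewrite count_S, Hp. lia. Qed.

Lemma count_interleave (p q1 q2 : nat -> bool) (N : nat) :
  (forall m, p (2 * m)%nat = q1 m) -> (forall m, p (2 * m + 1)%nat = q2 m) ->
  count p (2 * N) = (count q1 N + count q2 N)%nat.
Proof.
  intros H1 H2. induction N; [reflexivity|].
  replace (2 * S N)%nat with (S (S (2 * N))) by lia.
  rewrite !count_S, IHN. replace (S (2 * N)) with (2 * N + 1)%nat by lia.
  rewrite H1, H2. destruct (q1 N), (q2 N); lia.
Qed.

Lemma count_compl_interleave (p q1 q2 : nat -> bool) (N : nat) :
  (forall m, p (2 * m)%nat = q1 m) -> (forall m, p (2 * m + 1)%nat = q2 m) ->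
  count (compl p) (2 * N) = (count (compl q1) N + count (compl q2) N)%nat.
Proof.
  intros H1 H2. apply count_interleave; intros m; unfold compl; [rewrite H1 | rewrite H2]; auto.
Qed.

Definition has_density (p : nat -> bool) (L : R) : Prop :=
  is_lim_seq (fun N => INR (count p N) / INR N) L.

Definition density_ge (p : nat -> bool) (L : R) : Prop :=
  forall eps, 0 < eps ->
  exists N0, forall N, (N0 <= N)%nat -> INR N * (L - eps) <= INR (count p N).

Lemma density_ge_0 (p : nat -> bool) : density_ge p 0.
Proof.
  intros eps Heps. exists 0%nat. intros N _.
  pose proof (pos_INR N). pose proof (pos_INR (count p N)). nra.
Qed.

Lemma density_ge_true (p : nat -> bool) : (forall n, p n = true) -> density_ge p 1.
Proof.
  intros Hp eps Heps. exists 0%nat. intros N _. rewrite count_true by auto.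
  pose proof (pos_INR N). nra.
Qed.

Lemma density_ge_approx (p : nat -> bool) (L : R) :
  (forall eps, 0 < eps -> exists L', density_ge p L' /\ L - eps <= L') -> density_ge p L.
Proof.
  intros H eps Heps. destruct (H (eps / 2)) as [L' [HL' Hle]]; [lra|].
  destruct (HL' (eps / 2)) as [N0 HN0]; [lra|]. exists N0. intros N HN.
  specialize (HN0 N HN). pose proof (pos_INR N).
  assert (INR N * (L - eps) <= INR N * (L' - eps / 2)) by (apply Rmult_le_compat_l; lra). lra.
Qed.

Lemma density_ge_le (p : nat -> bool) (L L' : R) : density_ge p L -> L' <= L -> density_ge p L'.
Proof. intros H Hle. apply density_ge_approx. intros eps Heps. exists L. split; [auto | lra]. Qed.

Lemma has_density_of_ge (p : nat -> bool) (L : R) :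
  density_ge p L -> density_ge (compl p) (1 - L) -> has_density p L.
Proof.
  intros H1 H2. apply is_lim_seq_spec. intros [eps Heps]. simpl.
  destruct (H1 (eps / 2)) as [N1 HN1]; [lra|].
  destruct (H2 (eps / 2)) as [N2 HN2]; [lra|].
  exists (S (N1 + N2)). intros N HN.
  specialize (HN1 N ltac:(lia)). specialize (HN2 N ltac:(lia)).
  pose proof (count_compl p N) as Hc. apply (f_equal INR) in Hc. rewrite plus_INR in Hc.
  assert (HNpos : 0 < INR N) by (apply lt_0_INR; lia).
  replace (INR (count p N) / INR N - L) with ((INR (count p N) - INR N * L) / INR N)
    by (field; lra).
  rewrite Rabs_div, (Rabs_right (INR N)) by lra.
  apply (Rmult_lt_reg_r (INR N)); [auto|].
  unfold Rdiv. rewrite Rmult_assoc, Rinv_l, Rmult_1_r by lra.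
  apply Rabs_def1; nra.
Qed.

Lemma density_ge_of_has_density (p : nat -> bool) (L : R) :
  has_density p L -> density_ge p L /\ density_ge (compl p) (1 - L).
Proof.
  intros H. apply is_lim_seq_spec in H.
  split; intros eps Heps; destruct (H (mkposreal eps Heps)) as [N0 HN0]; simpl in HN0;
    exists (S N0); intros N HN; specialize (HN0 N ltac:(lia));
    assert (HNpos : 0 < INR N) by (apply lt_0_INR; lia);
    apply Rabs_def2 in HN0 as [Hlo Hhi].
  - apply (Rmult_lt_compat_l (INR N)) in Hhi; [|auto]. field_simplify in Hhi; lra.
  - pose proof (count_compl p N) as Hc. apply (f_equal INR) in Hc. rewrite plus_INR in Hc.
    apply (Rmult_lt_compat_l (INR N)) in Hlo; [|auto]. field_simplify in Hlo; lra.
Qed.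

Lemma density_ge_of_double (p : nat -> bool) (L : R) :
  (forall eps, 0 < eps -> exists N0, forall N, (N0 <= N)%nat ->
     2 * INR N * (L - eps) <= INR (count p (2 * N))) ->
  density_ge p L.
Proof.
  intros H eps Heps. destruct (H (eps / 2)) as [N0 HN0]; [lra|].
  destruct (INR_unbounded (Rabs L / eps)) as [N1 HN1].
  exists (2 * (N0 + N1))%nat. intros M HM.
  pose proof (Nat.div_mod M 2 ltac:(lia)) as HMdiv. pose proof (Nat.mod_upper_bound M 2 ltac:(lia)).
  set (N := (M / 2)%nat) in *.
  specialize (HN0 N ltac:(lia)).
  pose proof (le_INR _ _ (count_mono p (2 * N) M ltac:(lia))) as Hmono.
  assert (HMN : INR M <= 2 * INR N + 1).
  { replace (2 * INR N + 1) with (INR (2 * N + 1)) by (rewrite plus_INR, mult_INR; simpl; ring).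
    apply le_INR. lia. }
  assert (HNM : 2 * INR N <= INR M).
  { replace (2 * INR N) with (INR (2 * N)) by (rewrite mult_INR; simpl; ring). apply le_INR. lia. }
  assert (HLN : Rabs L <= INR N * eps).
  { assert (INR N1 <= INR N) by (apply le_INR; lia).
    apply Rmult_le_reg_r with (/ eps); [apply Rinv_0_lt_compat; lra|].
    rewrite Rmult_assoc, Rinv_r, Rmult_1_r by lra. unfold Rdiv in HN1. lra. }
  pose proof (Rle_abs L). pose proof (pos_INR N).
  destruct (Rle_dec 0 (L - eps)).
  - assert (INR M * (L - eps) <= (2 * INR N + 1) * (L - eps)) by (apply Rmult_le_compat_r; lra).
    nra.
  - pose proof (pos_INR (count p M)). nra.
Qed.

Lemma density_ge_interleave (p q1 q2 : nat -> bool) (a b : R) :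
  (forall N, (count q1 N + count q2 N <= count p (2 * N))%nat) ->
  density_ge q1 a -> density_ge q2 b -> density_ge p ((a + b) / 2).
Proof.
  intros Hc H1 H2. apply density_ge_of_double. intros eps Heps.
  destruct (H1 eps Heps) as [N1 HN1]. destruct (H2 eps Heps) as [N2 HN2].
  exists (N1 + N2)%nat. intros N HN.
  specialize (HN1 N ltac:(lia)). specialize (HN2 N ltac:(lia)).
  pose proof (le_INR _ _ (Hc N)) as HcN. rewrite plus_INR in HcN. lra.
Qed.

Lemma has_density_interleave (p q1 q2 : nat -> bool) (a b : R) :
  (forall m, p (2 * m)%nat = q1 m) -> (forall m, p (2 * m + 1)%nat = q2 m) ->
  has_density q1 a -> has_density q2 b -> has_density p ((a + b) / 2).
Proof.
  intros H1 H2 D1 D2.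
  apply density_ge_of_has_density in D1 as [A1 B1], D2 as [A2 B2].
  apply has_density_of_ge.
  - apply (density_ge_interleave p q1 q2); auto.
    intros N. rewrite (count_interleave p q1 q2 N H1 H2). lia.
  - replace (1 - (a + b) / 2) with ((1 - a + (1 - b)) / 2) by lra.
    apply (density_ge_interleave (compl p) (compl q1) (compl q2)); auto.
    intros N. rewrite (count_compl_interleave p q1 q2 N H1 H2). lia.
Qed.

(* When a sequence reappears, shifted, in its own odd terms, induction is unavailable;
   instead the finite unrollings of the recursion give lower densities converging
   geometrically to the fixed point [b]. *)
Section SelfSimilar.

Variables (I : Type) (shift : I -> I) (P Q : I -> nat -> bool) (a b : I -> R) (B : R).
Hypothesis count_split :
  forall i N, (count (Q i) N + count (P (shift i)) N <= count (P i) (2 * N))%nat.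
Hypothesis Q_density : forall i, density_ge (Q i) (a i).
Hypothesis b_fix : forall i, b i = (a i + b (shift i)) / 2.
Hypothesis b_bounded : forall i, Rabs (b i) <= B.

Fixpoint unrolled (n : nat) (i : I) : R :=
  match n with O => 0 | S n => (a i + unrolled n (shift i)) / 2 end.

Lemma density_ge_unrolled (n : nat) (i : I) : density_ge (P i) (unrolled n i).
Proof.
  revert i. induction n as [|n IH]; intros i; simpl.
  - apply density_ge_0.
  - apply density_ge_interleave with (q1 := Q i) (q2 := P (shift i)); auto.
Qed.

Lemma unrolled_close (n : nat) (i : I) : Rabs (unrolled n i - b i) <= B * (1 / 2) ^ n.
Proof.
  revert i. induction n as [|n IH]; intros i; simpl.
  - rewrite Rmult_1_r, Rminus_0_l, Rabs_Ropp. auto.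
  - rewrite (b_fix i).
    replace ((a i + unrolled n (shift i)) / 2 - (a i + b (shift i)) / 2)
      with ((unrolled n (shift i) - b (shift i)) / 2) by field.
    rewrite Rabs_div, (Rabs_right 2) by lra. specialize (IH (shift i)). lra.
Qed.

Lemma density_ge_fixpoint (i : I) : density_ge (P i) (b i).
Proof.
  apply density_ge_approx. intros eps Heps.
  assert (HB : 0 <= B) by (pose proof (Rabs_pos (b i)); pose proof (b_bounded i); lra).
  destruct (pow_lt_1_zero (1 / 2) ltac:(rewrite Rabs_right; lra) (eps / (B + 1))) as [n Hn].
  { apply Rdiv_lt_0_compat; lra. }
  specialize (Hn n (le_n n)). rewrite Rabs_right in Hn by (apply Rle_ge, pow_le; lra).
  exists (unrolled n i). split; [apply density_ge_unrolled|].
  pose proof (unrolled_close n i) as Hclose. apply Rabs_le_between in Hclose.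
  assert ((B + 1) * (1 / 2) ^ n < eps).
  { apply (Rmult_lt_compat_l (B + 1)) in Hn; [|lra]. field_simplify in Hn; lra. }
  pose proof (pow_le (1 / 2) n ltac:(lra)). nra.
Qed.

End SelfSimilar.

Lemma has_density_selfsimilar (I : Type) (shift : I -> I) (P Q : I -> nat -> bool)
    (a b : I -> R) (B : R) :
  (forall i m, P i (2 * m)%nat = Q i m) -> (forall i m, P i (2 * m + 1)%nat = P (shift i) m) ->
  (forall i, has_density (Q i) (a i)) ->
  (forall i, b i = (a i + b (shift i)) / 2) -> (forall i, 0 <= b i <= B) ->
  forall i, has_density (P i) (b i).
Proof.
  intros Heven Hodd HQ Hfix Hbound i.
  assert (HB : forall i, Rabs (b i) <= B /\ Rabs (1 - b i) <= 1 + B).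
  { intros j. specialize (Hbound j). split; unfold Rabs; destruct Rcase_abs; lra. }
  apply has_density_of_ge.
  - apply (density_ge_fixpoint I shift P Q a b B); auto.
    + intros j N. rewrite (count_interleave (P j) (Q j) (P (shift j)) N); auto.
    + intros j. apply density_ge_of_has_density, HQ.
    + intros j. apply HB.
  - apply (density_ge_fixpoint I shift (fun j => compl (P j)) (fun j => compl (Q j))
             (fun j => 1 - a j) (fun j => 1 - b j) (1 + B)); auto.
    + intros j N. rewrite (count_compl_interleave (P j) (Q j) (P (shift j)) N); auto.
    + intros j. apply density_ge_of_has_density, HQ.
    + intros j. rewrite (Hfix j). lra.
    + intros j. apply HB.
Qed.

(** * Laws of integer sequences *)

Definition has_law (g : nat -> Z) (f : Z -> R) : Prop :=
  forall k, has_density (fun n => Z.eqb (g n) k) (f k).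

Definition dirac0 (k : Z) : R := if Z.eqb k 0 then 1 else 0.

Definition mix (f1 : Z -> R) (s1 : Z) (f2 : Z -> R) (s2 : Z) (k : Z) : R :=
  (f1 (k - s1)%Z + f2 (k - s2)%Z) / 2.

Lemma eqb_add_r (x s k : Z) : Z.eqb (x + s) k = Z.eqb x (k - s).
Proof. destruct (Z.eqb_spec (x + s) k), (Z.eqb_spec x (k - s)); auto; lia. Qed.

Lemma has_law_zero (g : nat -> Z) : (forall n, g n = 0%Z) -> has_law g dirac0.
Proof.
  intros Hg k. unfold dirac0. apply has_density_of_ge; destruct (Z.eqb_spec k 0) as [->|Hk].
  - apply density_ge_true. intros n. rewrite Hg. reflexivity.
  - apply density_ge_0.
  - eapply density_ge_le; [apply density_ge_0 | lra].
  - eapply density_ge_le; [apply density_ge_true | lra].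
    intros n. unfold compl. rewrite Hg. destruct (Z.eqb_spec 0 k); auto; lia.
Qed.

Lemma has_law_interleave (g g1 g2 : nat -> Z) (s1 s2 : Z) (f1 f2 : Z -> R) :
  (forall m, g (2 * m)%nat = (g1 m + s1)%Z) -> (forall m, g (2 * m + 1)%nat = (g2 m + s2)%Z) ->
  has_law g1 f1 -> has_law g2 f2 -> has_law g (mix f1 s1 f2 s2).
Proof.
  intros Heven Hodd H1 H2 k.
  apply has_density_interleave with (q1 := fun n => Z.eqb (g1 n) (k - s1))
    (q2 := fun n => Z.eqb (g2 n) (k - s2)); auto.
  - intros m. rewrite Heven. apply eqb_add_r.
  - intros m. rewrite Hodd. apply eqb_add_r.
Qed.

Lemma has_law_selfsimilar (g g1 : nat -> Z) (s : Z) (f1 f : Z -> R) :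
  (forall m, g (2 * m)%nat = g1 m) -> (forall m, g (2 * m + 1)%nat = (g m + s)%Z) ->
  has_law g1 f1 -> (forall k, f k = (f1 k + f (k - s)%Z) / 2) -> (forall k, 0 <= f k <= 1) ->
  has_law g f.
Proof.
  intros Heven Hodd H1 Hfix Hbound k.
  apply (has_density_selfsimilar Z (fun j => (j - s)%Z) (fun j n => Z.eqb (g n) j)
           (fun j n => Z.eqb (g1 n) j) f1 f 1); auto.
  - intros j m. rewrite Heven. reflexivity.
  - intros j m. rewrite Hodd. apply eqb_add_r.
Qed.

(** * Sums over Z and moments *)

Definition Zseries (g : Z -> R) : R :=
  Series (fun n => g (Z.of_nat n)) + Series (fun n => g (- Z.of_nat (S n))%Z).

Definition ex_Zseries_abs (g : Z -> R) : Prop :=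
  ex_series (fun n => Rabs (g (Z.of_nat n))) /\
  ex_series (fun n => Rabs (g (- Z.of_nat (S n))%Z)).

Definition exp_decay (f : Z -> R) : Prop :=
  exists C, forall k, Rabs (f k) <= C * (1 / 2) ^ Z.abs_nat k.

Definition quad_bounded (P : Z -> R) : Prop :=
  exists A, forall k, Rabs (P k) <= A * (1 + IZR k ^ 2).

Lemma half_pow_antimono (m n : nat) : (m <= n)%nat -> (1 / 2) ^ n <= (1 / 2) ^ m.
Proof.
  intros Hmn. replace n with (m + (n - m))%nat by lia. rewrite pow_add.
  assert ((1 / 2) ^ (n - m) <= 1).
  { induction (n - m)%nat as [|j IH]; simpl; [lra|]. pose proof (pow_le (1 / 2) j). lra. }
  pose proof (pow_le (1 / 2) m). nra.
Qed.

Lemma quad_le_pow (n : nat) : 1 + INR n ^ 2 <= 4 * (3 / 2) ^ n.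
Proof.
  destruct (le_lt_dec 5 n) as [Hn|Hn].
  - replace n with ((n - 5) + 5)%nat by lia. induction (n - 5)%nat as [|j IH]; [simpl; lra|].
    replace (S j + 5)%nat with (S (j + 5)) by lia. rewrite S_INR. simpl pow in IH |- *.
    assert (5 <= INR (j + 5)) by (replace 5 with (INR 5) by (simpl; lra); apply le_INR; lia).
    nra.
  - destruct n as [|[|[|[|[|n]]]]]; try lia; simpl; lra.
Qed.

Lemma ex_series_quad_half_pow : ex_series (fun n => (1 + INR n ^ 2) * (1 / 2) ^ n).
Proof.
  apply (@ex_series_le R_AbsRing R_CompleteNormedModule) with (fun n => 4 * (3 / 4) ^ n).
  - intros n. change norm with Rabs. simpl.
    assert (Hpow : (3 / 4) ^ n = (3 / 2) ^ n * (1 / 2) ^ n)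
      by (rewrite <- Rpow_mult_distr; f_equal; lra).
    pose proof (quad_le_pow n). pose proof (pow_le (1 / 2) n ltac:(lra)).
    pose proof (pow2_ge_0 (INR n)).
    rewrite Rabs_right by (apply Rle_ge, Rmult_le_pos; lra). nra.
  - apply (@ex_series_scal_l R_AbsRing R_NormedModule).
    apply ex_series_geom. rewrite Rabs_right; lra.
Qed.

Lemma ex_Zseries_abs_weighted (P f : Z -> R) :
  quad_bounded P -> exp_decay f -> ex_Zseries_abs (fun k => P k * f k).
Proof.
  intros [A HA] [C HC].
  assert (Hbound : forall k, Rabs (P k * f k) <= A * C * ((1 + IZR k ^ 2) * (1 / 2) ^ Z.abs_nat k)).
  { intros k. rewrite Rabs_mult. specialize (HA k). specialize (HC k).
    pose proof (Rabs_pos (P k)). pose proof (Rabs_pos (f k)). pose proof (pow2_ge_0 (IZR k)).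
    pose proof (pow_le (1 / 2) (Z.abs_nat k) ltac:(lra)).
    apply Rle_trans with (A * (1 + IZR k ^ 2) * Rabs (f k)); [apply Rmult_le_compat_r; auto|].
    replace (A * C * ((1 + IZR k ^ 2) * (1 / 2) ^ Z.abs_nat k))
      with (A * (1 + IZR k ^ 2) * (C * (1 / 2) ^ Z.abs_nat k)) by ring.
    apply Rmult_le_compat_l; auto. lra. }
  assert (Hquad : ex_series (fun n => A * C * ((1 + INR n ^ 2) * (1 / 2) ^ n)))
    by exact (@ex_series_scal_l R_AbsRing R_NormedModule _ _ ex_series_quad_half_pow).
  split.
  - apply (@ex_series_le R_AbsRing R_CompleteNormedModule)
      with (b := fun n => A * C * ((1 + INR n ^ 2) * (1 / 2) ^ n)); [intros n | exact Hquad].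
    change norm with Rabs. simpl. rewrite Rabs_Rabsolu.
    specialize (Hbound (Z.of_nat n)). rewrite Zabs2Nat.id, <- INR_IZR_INZ in Hbound.
    exact Hbound.
  - apply (@ex_series_le R_AbsRing R_CompleteNormedModule)
      with (b := fun n => A * C * ((1 + INR (S n) ^ 2) * (1 / 2) ^ S n));
      [intros n | exact (proj1 (ex_series_incr_1 _) Hquad)].
    change norm with Rabs. simpl. rewrite Rabs_Rabsolu.
    specialize (Hbound (- Z.of_nat (S n))%Z).
    replace (Z.abs_nat (- Z.of_nat (S n))) with (S n) in Hbound by lia.
    rewrite opp_IZR, <- INR_IZR_INZ in Hbound.
    replace ((- INR (S n)) ^ 2) with (INR (S n) ^ 2) in Hbound by ring. exact Hbound.
Qed.

Lemma Zseries_ext (g h : Z -> R) : (forall k, g k = h k) -> Zseries g = Zseries h.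
Proof. intros H. unfold Zseries. f_equal; apply Series_ext; auto. Qed.

Lemma ex_Zseries_abs_ex_series (g : Z -> R) : ex_Zseries_abs g ->
  ex_series (fun n => g (Z.of_nat n)) /\ ex_series (fun n => g (- Z.of_nat (S n))%Z).
Proof. intros [H1 H2]. split; apply ex_series_Rabs; auto. Qed.

Lemma Zseries_plus (g h : Z -> R) : ex_Zseries_abs g -> ex_Zseries_abs h ->
  Zseries (fun k => g k + h k) = Zseries g + Zseries h.
Proof.
  intros Hg Hh. apply ex_Zseries_abs_ex_series in Hg as [Hg1 Hg2], Hh as [Hh1 Hh2].
  unfold Zseries. rewrite !Series_plus by auto. ring.
Qed.

Lemma Zseries_scal (c : R) (g : Z -> R) : Zseries (fun k => c * g k) = c * Zseries g.
Proof. unfold Zseries. rewrite !Series_scal_l. ring. Qed.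

Lemma Zseries_succ (g : Z -> R) : ex_Zseries_abs g -> Zseries (fun k => g (k + 1)%Z) = Zseries g.
Proof.
  intros Hg. apply ex_Zseries_abs_ex_series in Hg as [Hpos Hneg]. unfold Zseries.
  assert (Hneg0 : ex_series (fun n => g (- Z.of_nat n)%Z)) by (apply ex_series_incr_1; auto).
  rewrite (Series_incr_1 (fun n => g (Z.of_nat n))) by auto.
  rewrite (Series_ext (fun n => g (- Z.of_nat (S n) + 1)%Z) (fun n => g (- Z.of_nat n)%Z))
    by (intros; f_equal; lia).
  rewrite (Series_incr_1 (fun n => g (- Z.of_nat n)%Z)) by auto.
  rewrite (Series_ext (fun n => g (Z.of_nat n + 1)%Z) (fun n => g (Z.of_nat (S n))))
    by (intros; f_equal; lia).
  simpl. ring.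
Qed.

Lemma Zseries_translate (g : Z -> R) (s : Z) :
  (forall s', ex_Zseries_abs (fun k => g (k + s')%Z)) ->
  Zseries (fun k => g (k + s)%Z) = Zseries g.
Proof.
  intros Hg.
  assert (Hnat : forall n, Zseries (fun k => g (k + Z.of_nat n)%Z) = Zseries g /\
                           Zseries (fun k => g (k - Z.of_nat n)%Z) = Zseries g).
  { induction n as [|n [IHpos IHneg]].
    - split; apply Zseries_ext; intros k; f_equal; lia.
    - split.
      + rewrite <- IHpos, <- (Zseries_succ (fun k => g (k + Z.of_nat n)%Z)) by apply Hg.
        apply Zseries_ext. intros k. f_equal. lia.
      + rewrite <- IHneg, <- (Zseries_succ (fun k => g (k - Z.of_nat (S n))%Z)).
        * apply Zseries_ext. intros k. f_equal. lia.
        * exact (Hg (- Z.of_nat (S n))%Z). }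
  destruct (Z.le_ge_cases 0 s) as [Hs|Hs].
  - rewrite <- (proj1 (Hnat (Z.to_nat s))). apply Zseries_ext. intros k. f_equal. lia.
  - rewrite <- (proj2 (Hnat (Z.to_nat (- s)))). apply Zseries_ext. intros k. f_equal. lia.
Qed.

Lemma quad_bounded_ext (P Q : Z -> R) :
  (forall k, P k = Q k) -> quad_bounded P -> quad_bounded Q.
Proof. intros H [A HA]. exists A. intros k. rewrite <- H. apply HA. Qed.

Lemma quad_bounded_pow (m : nat) : (m <= 2)%nat -> quad_bounded (fun k => IZR k ^ m).
Proof.
  intros Hm. exists 1. intros k. pose proof (pow2_ge_0 (IZR k)).
  destruct m as [|[|[|m]]]; try lia; simpl; rewrite ?Rmult_1_r.
  - rewrite Rabs_R1. lra.
  - unfold Rabs. destruct Rcase_abs; nra.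
  - rewrite Rabs_right by nra. lra.
Qed.

Lemma quad_bounded_translate (P : Z -> R) (s : Z) :
  quad_bounded P -> quad_bounded (fun k => P (k + s)%Z).
Proof.
  intros [A HA]. exists (A * (2 + 2 * IZR s ^ 2)). intros k.
  assert (HA0 : 0 <= A)
    by (pose proof (HA 0%Z); pose proof (Rabs_pos (P 0%Z)); simpl in *; lra).
  eapply Rle_trans; [apply HA|]. rewrite plus_IZR, Rmult_assoc.
  apply Rmult_le_compat_l; [auto|].
  pose proof (pow2_ge_0 (IZR k - IZR s)). pose proof (pow2_ge_0 (IZR k * IZR s)).
  simpl. nra.
Qed.

Lemma exp_decay_translate (f : Z -> R) (s : Z) :
  exp_decay f -> exp_decay (fun k => f (k + s)%Z).
Proof.
  intros [C HC]. exists (C * 2 ^ Z.abs_nat s). intros k.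
  assert (HC0 : 0 <= C).
  { pose proof (HC 0%Z). pose proof (Rabs_pos (f 0%Z)). simpl in *. lra. }
  assert (Hk : (1 / 2) ^ Z.abs_nat (k + s) * (1 / 2) ^ Z.abs_nat s <= (1 / 2) ^ Z.abs_nat k).
  { rewrite <- pow_add. apply half_pow_antimono. lia. }
  assert (Hs : 2 ^ Z.abs_nat s * (1 / 2) ^ Z.abs_nat s = 1).
  { rewrite <- Rpow_mult_distr. replace (2 * (1 / 2)) with 1 by field. apply pow1. }
  pose proof (pow_le 2 (Z.abs_nat s) ltac:(lra)).
  eapply Rle_trans; [apply HC|].
  transitivity (C * 2 ^ Z.abs_nat s * ((1 / 2) ^ Z.abs_nat (k + s) * (1 / 2) ^ Z.abs_nat s)).
  { right. transitivity (C * (1 / 2) ^ Z.abs_nat (k + s) * (2 ^ Z.abs_nat s * (1 / 2) ^ Z.abs_nat s));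
      [rewrite Hs | ]; ring. }
  apply Rmult_le_compat_l; [apply Rmult_le_pos|]; auto.
Qed.

Lemma Zseries_weighted_translate (P f : Z -> R) (s : Z) :
  quad_bounded P -> exp_decay f ->
  Zseries (fun k => P k * f (k - s)%Z) = Zseries (fun k => P (k + s)%Z * f k).
Proof.
  intros HP Hf.
  rewrite <- (Zseries_translate (fun k => P (k + s)%Z * f k) (- s)).
  - apply Zseries_ext. intros k. do 2 f_equal; lia.
  - intros s'. apply (ex_Zseries_abs_weighted (fun k => P (k + s' + s)%Z) (fun k => f (k + s')%Z)).
    + apply (quad_bounded_ext (fun k => P (k + (s' + s))%Z));
        [intros; f_equal; lia | apply quad_bounded_translate, HP].
    + apply exp_decay_translate, Hf.
Qed.

Lemma Zsum_abs_Zseries (g : Z -> R) : ex_Zseries_abs g -> Zsum_abs g (Zseries g).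
Proof.
  intros Hg. pose proof (ex_Zseries_abs_ex_series g Hg) as [Hpos Hneg].
  destruct Hg as [Hpos_abs Hneg_abs]. split.
  - apply (ex_series_plus (fun n => Rabs (g (Z.of_nat n))) (fun n => Rabs (g (- Z.of_nat n)%Z)));
      auto.
    apply ex_series_incr_1. auto.
  - apply is_series_decr_1.
    match goal with |- is_series _ ?l => replace l with
      (Series (fun n => g (Z.of_nat (S n))) + Series (fun n => g (- Z.of_nat (S n))%Z)) end.
    2:{ unfold Zseries. rewrite (Series_incr_1 (fun n => g (Z.of_nat n))) by auto. simpl.
        change (plus ?x ?y) with (x + y). change (opp ?x) with (- x). ring. }
    apply is_series_ext with (fun n => plus (g (Z.of_nat (S n))) (g (- Z.of_nat (S n))%Z));
      [reflexivity|].
    apply (@is_series_plus R_AbsRing R_NormedModule); apply Series_correct; auto.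
    apply (ex_series_incr_1 (fun n => g (Z.of_nat n))). auto.
Qed.


Definition mom (f : Z -> R) (m : nat) : R := Zseries (fun k => IZR k ^ m * f k).

Lemma ex_Zseries_abs_scal (c : R) (g : Z -> R) :
  ex_Zseries_abs g -> ex_Zseries_abs (fun k => c * g k).
Proof.
  intros [H1 H2].
  split; eapply ex_series_ext; try (intros n; symmetry; apply Rabs_mult);
    apply (@ex_series_scal_l R_AbsRing R_NormedModule); auto.
Qed.

Lemma ex_Zseries_abs_plus (g h : Z -> R) :
  ex_Zseries_abs g -> ex_Zseries_abs h -> ex_Zseries_abs (fun k => g k + h k).
Proof.
  intros [Hg1 Hg2] [Hh1 Hh2].
  split; eapply (@ex_series_le R_AbsRing R_CompleteNormedModule);
    try (intros n; change norm with Rabs; simpl; rewrite Rabs_Rabsolu; apply Rabs_triang);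
    apply (ex_series_plus (fun n => Rabs (g _)) (fun n => Rabs (h _))); auto.
Qed.

Lemma ex_Zseries_abs_mom (f : Z -> R) (m : nat) :
  exp_decay f -> (m <= 2)%nat -> ex_Zseries_abs (fun k => IZR k ^ m * f k).
Proof. intros Hf Hm. apply ex_Zseries_abs_weighted; auto. apply quad_bounded_pow, Hm. Qed.

Lemma exp_decay_shift (f : Z -> R) (s : Z) : exp_decay f -> exp_decay (fun k => f (k - s)%Z).
Proof. exact (exp_decay_translate f (- s)). Qed.

Lemma mom_translate (f : Z -> R) (s : Z) (m : nat) : exp_decay f -> (m <= 2)%nat ->
  mom (fun k => f (k - s)%Z) m = Zseries (fun k => (IZR k + IZR s) ^ m * f k).
Proof.
  intros Hf Hm. unfold mom. rewrite (Zseries_weighted_translate (fun k => IZR k ^ m));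
    [|apply quad_bounded_pow, Hm | exact Hf].
  apply Zseries_ext. intros k. rewrite plus_IZR. reflexivity.
Qed.

Section Moments.

Variable f : Z -> R.
Hypothesis f_decay : exp_decay f.

Let mom_abs (m : nat) : (m <= 2)%nat -> ex_Zseries_abs (fun k => IZR k ^ m * f k) :=
  ex_Zseries_abs_mom f m f_decay.

Lemma mom0_shift (s : Z) : mom (fun k => f (k - s)%Z) 0 = mom f 0.
Proof. rewrite mom_translate by (auto; lia). reflexivity. Qed.

Lemma mom1_shift (s : Z) : mom (fun k => f (k - s)%Z) 1 = mom f 1 + IZR s * mom f 0.
Proof.
  rewrite mom_translate by (auto; lia). unfold mom.
  rewrite <- Zseries_scal, <- Zseries_plus by (try apply ex_Zseries_abs_scal; apply mom_abs; lia).
  apply Zseries_ext. intros k. ring.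
Qed.

Lemma mom2_shift (s : Z) :
  mom (fun k => f (k - s)%Z) 2 = mom f 2 + 2 * IZR s * mom f 1 + IZR s ^ 2 * mom f 0.
Proof.
  rewrite mom_translate by (auto; lia). unfold mom.
  rewrite <- !Zseries_scal, <- !Zseries_plus
    by (repeat apply ex_Zseries_abs_plus; try apply ex_Zseries_abs_scal; apply mom_abs; lia).
  apply Zseries_ext. intros k. ring.
Qed.

End Moments.

Lemma exp_decay_mix (f1 f2 : Z -> R) (s1 s2 : Z) :
  exp_decay f1 -> exp_decay f2 -> exp_decay (mix f1 s1 f2 s2).
Proof.
  intros H1 H2. apply (exp_decay_shift f1 s1) in H1 as [C1 H1].
  apply (exp_decay_shift f2 s2) in H2 as [C2 H2].
  exists ((C1 + C2) / 2). intros k. specialize (H1 k). specialize (H2 k). unfold mix.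
  unfold Rdiv. rewrite Rabs_mult, (Rabs_right (/ 2)) by lra.
  pose proof (Rabs_triang (f1 (k - s1)%Z) (f2 (k - s2)%Z)). nra.
Qed.

Lemma mom_mix (f1 f2 : Z -> R) (s1 s2 : Z) (m : nat) :
  exp_decay f1 -> exp_decay f2 -> (m <= 2)%nat ->
  mom (mix f1 s1 f2 s2) m = (mom (fun k => f1 (k - s1)%Z) m + mom (fun k => f2 (k - s2)%Z) m) / 2.
Proof.
  intros H1 H2 Hm. unfold mom, mix.
  rewrite <- Zseries_plus by (apply ex_Zseries_abs_mom; auto; apply exp_decay_shift; auto).
  unfold Rdiv. rewrite Rmult_comm, <- Zseries_scal.
  apply Zseries_ext. intros k. field.
Qed.

Lemma exp_decay_dirac0 : exp_decay dirac0.
Proof.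
  exists 1. intros k. unfold dirac0. pose proof (pow_le (1 / 2) (Z.abs_nat k) ltac:(lra)).
  destruct (Z.eqb_spec k 0) as [->|]; simpl.
  - rewrite Rabs_R1. lra.
  - rewrite Rabs_R0. lra.
Qed.

Lemma Series_zero (a : nat -> R) : (forall n, a n = 0) -> Series a = 0.
Proof.
  intros H. rewrite (Series_ext a (fun n => 0 * 0)) by (intros; rewrite H; ring).
  rewrite Series_scal_l. ring.
Qed.

Lemma mom_dirac0 (m : nat) : (m <= 2)%nat -> mom dirac0 m = 0 ^ m.
Proof.
  intros Hm. pose proof (ex_Zseries_abs_ex_series _ (ex_Zseries_abs_mom dirac0 m exp_decay_dirac0 Hm))
    as [Hpos _].
  unfold mom, Zseries. rewrite Series_incr_1 by auto.
  rewrite !Series_zero; [unfold dirac0; simpl; ring | |];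
    intros n; unfold dirac0; case Z.eqb_spec; intros; try lia; ring.
Qed.

(** * The laws of [d t] *)

Lemma has_law_d_even_0 : has_law (d_even 0) dirac0.
Proof. apply has_law_zero. intros n. apply d_zero. Qed.

Lemma has_law_d_odd_0 : has_law (d_odd 0) dirac0.
Proof. apply has_law_zero. intros n. apply d_zero. Qed.

Definition law_d_even_1 : Z -> R := mix dirac0 0 dirac0 1.

(* Since [d_odd 1 (2 m + 1) = d_odd 1 m - 1], the law of [d_odd 1] must be the bounded
   solution of [f k = (law_d_even_1 k + f (k + 1)) / 2]; this is that solution. *)
Definition law_d_odd_1 (k : Z) : R :=
  if Z.leb 2 k then 0 else if Z.eqb k 1 then 1 / 4 else 3 / 8 * (1 / 2) ^ Z.to_nat (- k).

Lemma has_law_d_even_1 : has_law (d_even 1) law_d_even_1.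
Proof.
  apply has_law_interleave with (g1 := d_even 0) (g2 := d_odd 0).
  - exact (d_even_succ_double_even 0).
  - exact (d_even_succ_double_odd 0).
  - exact has_law_d_even_0.
  - exact has_law_d_odd_0.
Qed.

Lemma law_d_odd_1_fix (k : Z) :
  law_d_odd_1 k = (law_d_even_1 k + law_d_odd_1 (k - -1)%Z) / 2.
Proof.
  replace (k - -1)%Z with (k + 1)%Z by lia.
  unfold law_d_odd_1, law_d_even_1, mix, dirac0.
  destruct (Z.leb_spec 2 k), (Z.leb_spec 2 (k + 1)), (Z.eqb_spec k 1), (Z.eqb_spec (k + 1) 1),
    (Z.eqb_spec (k - 0) 0), (Z.eqb_spec (k - 1) 0); try lia; try lra.
  - replace k with 0%Z by lia. simpl. lra.
  - replace (Z.to_nat (- k)) with (S (Z.to_nat (- (k + 1)))) by lia. simpl. lra.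
Qed.

Lemma law_d_odd_1_bounds (k : Z) : 0 <= law_d_odd_1 k <= (1 / 2) ^ Z.abs_nat k.
Proof.
  pose proof (pow_le (1 / 2) (Z.abs_nat k) ltac:(lra)).
  unfold law_d_odd_1. destruct (Z.leb_spec 2 k); [lra|]. destruct (Z.eqb_spec k 1) as [->|].
  - simpl. lra.
  - replace (Z.to_nat (- k)) with (Z.abs_nat k) by lia. lra.
Qed.

Lemma has_law_d_odd_1 : has_law (d_odd 1) law_d_odd_1.
Proof.
  apply has_law_selfsimilar with (g1 := d_even 1) (s := (-1)%Z) (f1 := law_d_even_1).
  - exact (d_odd_succ_double_even 0).
  - exact (d_odd_succ_double_odd 0).
  - exact has_law_d_even_1.
  - exact law_d_odd_1_fix.
  - intros k. pose proof (law_d_odd_1_bounds k). pose proof (half_pow_antimono 0 (Z.abs_nat k) ltac:(lia)).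
    simpl in *. lra.
Qed.

Lemma exp_decay_law_d_even_1 : exp_decay law_d_even_1.
Proof. apply exp_decay_mix; apply exp_decay_dirac0. Qed.

Lemma exp_decay_law_d_odd_1 : exp_decay law_d_odd_1.
Proof.
  exists 1. intros k. pose proof (law_d_odd_1_bounds k). rewrite Rabs_right by lra. lra.
Qed.

Lemma moments_law_d_even_1 :
  mom law_d_even_1 0 = 1 /\ mom law_d_even_1 1 = 1 / 2 /\ mom law_d_even_1 2 = 1 / 2.
Proof.
  unfold law_d_even_1.
  rewrite !mom_mix, !mom0_shift, !mom1_shift, !mom2_shift, !mom_dirac0 by (auto using exp_decay_dirac0).
  simpl. repeat split; lra.
Qed.

(* Taking moments in [law_d_odd_1_fix] gives linear equations for them. *)
Lemma moments_law_d_odd_1 :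
  mom law_d_odd_1 0 = 1 /\ mom law_d_odd_1 1 = - (1 / 2) /\ mom law_d_odd_1 2 = 5 / 2.
Proof.
  destruct moments_law_d_even_1 as [E0 [E1 E2]].
  assert (Hfix : forall m, mom law_d_odd_1 m = mom (mix law_d_even_1 0 law_d_odd_1 (-1)) m).
  { intros m. unfold mom. apply Zseries_ext. intros k. rewrite law_d_odd_1_fix at 1.
    unfold mix. rewrite Z.sub_0_r. reflexivity. }
  pose proof (Hfix 0%nat) as M0. pose proof (Hfix 1%nat) as M1. pose proof (Hfix 2%nat) as M2.
  rewrite mom_mix, !mom0_shift in M0 by (auto using exp_decay_law_d_even_1, exp_decay_law_d_odd_1).
  rewrite mom_mix, !mom1_shift in M1 by (auto using exp_decay_law_d_even_1, exp_decay_law_d_odd_1).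
  rewrite mom_mix, !mom2_shift in M2 by (auto using exp_decay_law_d_even_1, exp_decay_law_d_odd_1).
  rewrite E0, E1, E2 in *. simpl in *. repeat split; lra.
Qed.

Section Variance.

Variable v : nat -> R.
Hypothesis hv0 : v 0%nat = 0.
Hypothesis hv1 : v 1%nat = 3 / 2.
Hypothesis hv4 : forall t : nat, v (4 * t)%nat = v (2 * t)%nat.
Hypothesis hv42 : forall t : nat, v (4 * t + 2)%nat = v (2 * t + 1)%nat + 1.
Hypothesis hv21 : forall t : nat, v (2 * t + 1)%nat = (v t + v (t + 1)%nat) / 2 + 3 / 4.

Record parity_laws (t : nat) (e o : Z -> R) : Prop := {
  law_even : has_law (d_even t) e;
  law_odd : has_law (d_odd t) o;
  decay_even : exp_decay e;
  decay_odd : exp_decay o;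
  mass_even : mom e 0 = 1;
  mass_odd : mom o 0 = 1;
  mean_even : mom e 1 = IZR (parity t) / 2;
  mean_odd : mom o 1 = - IZR (parity t) / 2;
  mean_second_moment : (mom e 2 + mom o 2) / 2 = v t }.

Lemma v_double (u : nat) : v (2 * u)%nat = v u + IZR (parity u).
Proof.
  unfold parity. destruct (Nat.Even_or_Odd u) as [[w ->]|[w ->]].
  - replace (2 * (2 * w))%nat with (4 * w)%nat by lia. rewrite hv4, Nat.odd_even. simpl. lra.
  - replace (2 * (2 * w + 1))%nat with (4 * w + 2)%nat by lia.
    rewrite hv42, Nat.odd_odd. simpl. lra.
Qed.

Lemma parity_laws_0 : parity_laws 0 dirac0 dirac0.
Proof.
  split; auto using has_law_d_even_0, has_law_d_odd_0, exp_decay_dirac0;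
    rewrite ?mom_dirac0 by lia; unfold parity; simpl; lra.
Qed.

Lemma parity_laws_1 : parity_laws 1 law_d_even_1 law_d_odd_1.
Proof.
  destruct moments_law_d_even_1 as [E0 [E1 E2]], moments_law_d_odd_1 as [O0 [O1 O2]].
  split; auto using has_law_d_even_1, has_law_d_odd_1, exp_decay_law_d_even_1,
    exp_decay_law_d_odd_1; unfold parity; simpl; lra.
Qed.

Lemma parity_laws_double (u : nat) (e o : Z -> R) :
  parity_laws u e o ->
  parity_laws (2 * u) (mix e 0 o 0) (mix e (parity u) o (- parity u)).
Proof.
  intros [De Do Ge Go E0 O0 E1 O1 E2].
  pose proof (v_double u) as Hv.
  split; try apply exp_decay_mix; auto.
  - apply has_law_interleave with (g1 := d_even u) (g2 := d_odd u); auto; intros m.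
    + rewrite d_even_double_even. lia.
    + rewrite d_even_double_odd. lia.
  - apply has_law_interleave with (g1 := d_even u) (g2 := d_odd u); auto; intros m.
    + apply d_odd_double_even.
    + rewrite d_odd_double_odd. lia.
  all: rewrite !mom_mix, ?mom0_shift, ?mom1_shift, ?mom2_shift, ?parity_double by auto.
  all: rewrite ?opp_IZR; destruct (parity_01 u) as [Hp|Hp]; rewrite Hp in *; simpl in *; lra.
Qed.

Lemma parity_laws_succ_double (u : nat) (e o e' o' : Z -> R) :
  parity_laws u e o -> parity_laws (u + 1) e' o' ->
  parity_laws (2 * u + 1) (mix e (parity u) o (1 - parity u)) (mix e' 0 o' (-1)).
Proof.
  intros [De Do Ge Go E0 O0 E1 O1 E2] [De' Do' Ge' Go' E0' O0' E1' O1' E2'].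
  pose proof (hv21 u) as Hv. rewrite parity_succ in E1', O1'.
  split; try apply exp_decay_mix; auto.
  - apply has_law_interleave with (g1 := d_even u) (g2 := d_odd u); auto; intros m.
    + apply d_even_succ_double_even.
    + apply d_even_succ_double_odd.
  - apply has_law_interleave with (g1 := d_even (u + 1)) (g2 := d_odd (u + 1)); auto; intros m.
    + rewrite d_odd_succ_double_even. lia.
    + apply d_odd_succ_double_odd.
  all: rewrite !mom_mix, ?mom0_shift, ?mom1_shift, ?mom2_shift, ?parity_succ_double by auto.
  all: rewrite ?minus_IZR in *; destruct (parity_01 u) as [Hp|Hp]; rewrite Hp in *; simpl in *; lra.
Qed.

Lemma parity_laws_exist (t : nat) : exists e o, parity_laws t e o.
Proof.
  induction t as [t IH] using (well_founded_induction lt_wf).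
  destruct t as [|[|t]]; [eauto using parity_laws_0 | eauto using parity_laws_1 |].
  destruct (Nat.Even_or_Odd (S (S t))) as [[u Hu]|[u Hu]]; rewrite Hu in *.
  - destruct (IH u) as [e [o H]]; [lia|]. eauto using parity_laws_double.
  - destruct (IH u) as [e [o H]]; [lia|]. destruct (IH (u + 1)%nat) as [e' [o' H']]; [lia|].
    eauto using parity_laws_succ_double.
Qed.

End Variance.

Theorem proposition3p5 (v : nat -> R)
  (hv0 : v 0%nat = 0) (hv1 : v 1%nat = 3 / 2)
  (hv4 : forall t : nat, v (4 * t)%nat = v (2 * t)%nat)
  (hv42 : forall t : nat, v (4 * t + 2)%nat = v (2 * t + 1)%nat + 1)
  (hv21 : forall t : nat, v (2 * t + 1)%nat = (v t + v (t + 1)%nat) / 2 + 3 / 4)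
  (t : nat) :
  exists c : Z -> R,
    (forall k : Z, has_density_d t k (c k)) /\
    Zsum_abs (fun k => IZR k * c k) 0 /\
    Zsum_abs (fun k => (IZR k - 0) ^ 2 * c k) (v t).
Proof.
  destruct (parity_laws_exist v hv0 hv1 hv4 hv42 hv21 t)
    as [e [o [De Do Ge Go E0 O0 E1 O1 E2]]].
  set (c := mix e 0 o 0).
  assert (Hc : exp_decay c) by (apply exp_decay_mix; auto).
  assert (Hmom : forall m, (m <= 2)%nat -> mom c m = (mom e m + mom o m) / 2).
  { intros m Hm. unfold c. rewrite mom_mix by auto. unfold mom.
    do 2 f_equal; apply Zseries_ext; intros k; rewrite Z.sub_0_r; reflexivity. }
  exists c. split; [|split].
  - apply (has_law_interleave (d t) (d_even t) (d_odd t) 0 0 e o); auto; intros m;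
      rewrite Z.add_0_r; reflexivity.
  - replace 0 with (Zseries (fun k => IZR k * c k)).
    + apply Zsum_abs_Zseries, ex_Zseries_abs_weighted; auto.
      apply (quad_bounded_ext (fun k => IZR k ^ 1)); [intros; ring | apply quad_bounded_pow; lia].
    + rewrite <- (Zseries_ext (fun k => IZR k ^ 1 * c k)) by (intros; ring).
      change (mom c 1 = 0). rewrite Hmom by lia. lra.
  - replace (v t) with (Zseries (fun k => (IZR k - 0) ^ 2 * c k)).
    + apply Zsum_abs_Zseries, ex_Zseries_abs_weighted; auto.
      apply (quad_bounded_ext (fun k => IZR k ^ 2)); [intros; ring | apply quad_bounded_pow; lia].
    + rewrite <- (Zseries_ext (fun k => IZR k ^ 2 * c k)) by (intros; ring).
      change (mom c 2 = v t). rewrite Hmom by lia. lra.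
Qed.
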